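(* Let $\xi$ be the distribution defined below. Then $\widehat\xi(1)<\infty$ and $\widehat\xi(1+i)=0$.
   Context: Define on $[0,\infty)$ the functions $\phi_1(x)=e^{-x}\big(3\pi+1+\sqrt2\sin(x-\tfrac{\pi}{4})\big)$ and $\phi_2(x)=\frac{1}{3\pi}1_{[0,2\pi)}(x)+\sum_{n=1}^\infty\frac{1}{\pi^3n^2}1_{[2n\pi,2(n+1)\pi)}(x)$. Both are positive, right-continuous and decreasing on $[0,\infty)$, with $\phi_1(0)\phi_2(0)=1$. Let $\xi$ be the probability distribution on $[0,\infty)$ whose tail is $\bar\xi(x):=\xi((x,\infty))=\phi_1(x)\phi_2(x)$ for $x\ge0$. For a distribution $\rho$, $\widehat\rho(w):=\int e^{wx}\rho(dx)$ for complex $w$ whenever the integral converges absolutely. *)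

From Stdlib Require Import Reals Lra.
Open Scope R_scope.

Definition phi1 (x : R) : R :=
  exp (- x) * (3 * PI + 1 + sqrt 2 * sin (x - PI / 4)).

(* phi_2(x) = 1/(3pi) 1_[0,2pi)(x) + sum_{n>=1} 1/(pi^3 n^2) 1_[2n pi, 2(n+1) pi)(x).
   For x >= 0 exactly one indicator is nonzero; the relevant index is
   n = floor(x / (2 pi)) (Int_part is the floor). *)
Definition phi2 (x : R) : R :=
  if Rlt_dec x 0 then 0
  else if Rlt_dec x (2 * PI) then / (3 * PI)
  else / (PI ^ 3 * (IZR (Int_part (x / (2 * PI)))) ^ 2).

(* tail of xi:  xi((x,oo)) = phi1 x * phi2 x for x >= 0, and 1 for x < 0
   (xi lives on [0,oo)). *)
Definition xi_tail (x : R) : R :=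
  if Rlt_dec x 0 then 1 else phi1 x * phi2 x.

Definition xi_cdf (x : R) : R := 1 - xi_tail x.

Fixpoint rs_sum (g F : R -> R) (p t : nat -> R) (n : nat) : R :=
  match n with
  | O => 0
  | S k => rs_sum g F p t k + g (t k) * (F (p (S k)) - F (p k))
  end.

Definition tagged_partition (a b : R) (n : nat) (p t : nat -> R) (delta : R) : Prop :=
  p O = a /\ p n = b /\
  (forall k, (k < n)%nat ->
     (p k < p (S k)) /\ (p k <= t k <= p (S k)) /\ (p (S k) - p k < delta)).

Definition RS_integral (g F : R -> R) (a b I : R) : Prop :=
  forall eps, 0 < eps -> exists delta, (0 < delta) /\
    forall n p t, tagged_partition a b n p t delta ->
      Rabs (rs_sum g F p t n - I) < eps.

(* L = int_[0,oo) g dmu, where mu is the measure on [0,oo) with distribution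
   function F (F(x) = mu([0,x]), right-continuous):
   mu({0}) g(0) + lim_{T -> oo} int_(0,T] g dF  (improper Lebesgue–Stieltjes). *)
Definition LS_integral_0_inf (g F : R -> R) (L : R) : Prop :=
  exists I : R -> R,
    (forall T, 0 < T -> RS_integral g F 0 T (I T)) /\
    (forall eps, 0 < eps -> exists M, forall T, M < T ->
        Rabs (g 0 * F 0 + I T - L) < eps).

(* hat xi (a + i b) = re + i im, i.e.
   int e^{ax} cos(bx) xi(dx) = re  and  int e^{ax} sin(bx) xi(dx) = im *)
Definition xi_hat_is (a b re im : R) : Prop :=
  LS_integral_0_inf (fun x => exp (a * x) * cos (b * x)) xi_cdf re /\
  LS_integral_0_inf (fun x => exp (a * x) * sin (b * x)) xi_cdf im.

(* On the block [2 PI k <= x < 2 PI (k + 1)] the distribution function of xi is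
   [F = 1 - c_k e^(-x) (3 PI + 1 + sin x - cos x)], with [c_0 = 1/(3 PI)] and
   [c_k = 1/(PI^3 k^2)].  Integrate [g x = e^x (al + be cos x + ga sin x)] against it:
   inside block [k], [g dF = c_k h(x) dx] with [h] a trigonometric polynomial of mean
   [al (3 PI + 1) - be], and at [2 PI k] the jump of [F] contributes
   [(al + be) 3 PI (c_(k-1) - c_k)], which telescopes.  The Basel sum gives
   [sum c_k = 1/(3 PI) + 1/(6 PI) = 1/(2 PI)], hence [int g dxi = al (3 PI + 2)]:
   [hat xi (1) = 3 PI + 2], and [al = 0] makes both parts of [hat xi (1 + i)] vanish.
   Each Riemann–Stieltjes sum over [[0, T]] is compared with an explicit primitive,
   blockwise by the mean value theorem, and [sum 1/k^2 = PI^2/6] is derived from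
   [csc^2 x = (csc^2 (x/2) + csc^2 ((x + PI)/2)) / 4]. *)

From Stdlib Require Import Reals Lra Lia ZArith.
From Coquelicot Require Import Coquelicot.
Open Scope R_scope.

(* [partial_sum f n] has [n] terms [f 0, ..., f (n - 1)], one fewer than [sum_f_R0 f n]. *)
Fixpoint partial_sum (f : nat -> R) (n : nat) : R :=
  match n with O => 0 | S k => partial_sum f k + f k end.

Lemma partial_sum_ext f g n :
  (forall k, (k < n)%nat -> f k = g k) -> partial_sum f n = partial_sum g n.
Proof.
  induction n as [|n IH]; intros E; simpl; [reflexivity|].
  rewrite IH by (intros; apply E; lia); rewrite E by lia; reflexivity.
Qed.

Lemma partial_sum_plus f g n :
  partial_sum (fun k => f k + g k) n = partial_sum f n + partial_sum g n.
Proof. induction n; simpl; [ring | rewrite IHn; ring]. Qed.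

Lemma partial_sum_scal a f n :
  partial_sum (fun k => a * f k) n = a * partial_sum f n.
Proof. induction n; simpl; [ring | rewrite IHn; ring]. Qed.

Lemma partial_sum_const a n : partial_sum (fun _ => a) n = INR n * a.
Proof. induction n; simpl partial_sum; [simpl; ring | rewrite IHn, S_INR; ring]. Qed.

Lemma partial_sum_le f g n :
  (forall k, (k < n)%nat -> f k <= g k) -> partial_sum f n <= partial_sum g n.
Proof.
  induction n as [|n IH]; intros H; simpl; [lra|].
  assert (f n <= g n) by (apply H; lia).
  assert (partial_sum f n <= partial_sum g n) by (apply IH; intros; apply H; lia).
  lra.
Qed.

Lemma partial_sum_incr f n m :
  (forall k, 0 <= f k) -> (n <= m)%nat -> partial_sum f n <= partial_sum f m.
Proof. intros Hf Hnm; induction Hnm; simpl; [lra | specialize (Hf m); lra]. Qed.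

Lemma partial_sum_app f n m :
  partial_sum f (n + m) = partial_sum f n + partial_sum (fun k => f (n + k)%nat) m.
Proof.
  induction m as [|m IH]; simpl; [rewrite Nat.add_0_r; ring|].
  rewrite Nat.add_succ_r; simpl; rewrite IH; ring.
Qed.

Lemma partial_sum_shift f n :
  partial_sum f (S n) = f O + partial_sum (fun k => f (S k)) n.
Proof. induction n; simpl in *; [ring | rewrite IHn; ring]. Qed.

Lemma partial_sum_rev f n :
  partial_sum f n = partial_sum (fun k => f (n - 1 - k)%nat) n.
Proof.
  induction n as [|n IH]; [reflexivity|].
  rewrite (partial_sum_shift (fun k => f (S n - 1 - k)%nat)).
  simpl partial_sum at 1; rewrite IH, Rplus_comm.
  replace (S n - 1 - 0)%nat with n by lia; f_equal.
  apply partial_sum_ext; intros k _; f_equal; lia.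
Qed.

Lemma partial_sum_even_odd f n :
  partial_sum f (2 * n) = partial_sum (fun k => f (2 * k)%nat + f (2 * k + 1)%nat) n.
Proof.
  induction n as [|n IH]; [reflexivity|].
  replace (2 * S n)%nat with (S (S (2 * n))) by lia.
  change (partial_sum f (2 * n) + f (2 * n)%nat + f (S (2 * n)) =
          partial_sum (fun k => f (2 * k)%nat + f (2 * k + 1)%nat) n
          + (f (2 * n)%nat + f (2 * n + 1)%nat)).
  rewrite IH; replace (2 * n + 1)%nat with (S (2 * n)) by lia; ring.
Qed.

(** * The Basel sum *)

Definition csc2 (x : R) : R := / sin x ^ 2.

Lemma csc2_half_angles x : sin x <> 0 ->
  sin (x / 2) <> 0 /\ sin ((x + PI) / 2) <> 0 /\
  csc2 x = / 4 * (csc2 (x / 2) + csc2 ((x + PI) / 2)).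
Proof.
  intros Hx.
  assert (Es : sin x = 2 * sin (x / 2) * cos (x / 2))
    by (rewrite <- sin_2a; f_equal; field).
  assert (Ec : sin ((x + PI) / 2) = cos (x / 2)).
  { replace ((x + PI) / 2) with (x / 2 + PI / 2) by field.
    rewrite sin_plus, sin_PI2, cos_PI2; ring. }
  rewrite Ec; rewrite Es in Hx.
  assert (Hs : sin (x / 2) <> 0) by (intro C; apply Hx; rewrite C; ring).
  assert (Hc : cos (x / 2) <> 0) by (intro C; apply Hx; rewrite C; ring).
  repeat split; auto.
  pose proof (sin2_cos2 (x / 2)) as P; unfold Rsqr in P.
  unfold csc2; rewrite Es, Ec.
  replace (/ 4 * (/ sin (x / 2) ^ 2 + / cos (x / 2) ^ 2)) with
    (/ 4 * ((sin (x / 2) * sin (x / 2) + cos (x / 2) * cos (x / 2)) /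
            (sin (x / 2) ^ 2 * cos (x / 2) ^ 2))) by (field; auto).
  rewrite P; field; auto.
Qed.

Lemma csc2_iterated_half_angles n : forall x, sin x <> 0 ->
  csc2 x = (/ 4) ^ n * partial_sum (fun k => csc2 ((x + INR k * PI) / 2 ^ n)) (2 ^ n).
Proof.
  induction n as [|n IH]; intros x Hx.
  - simpl; replace ((x + 0 * PI) / 1) with x by field; ring.
  - destruct (csc2_half_angles x Hx) as (H1 & H2 & E).
    rewrite E, (IH _ H1), (IH _ H2).
    replace (2 ^ S n)%nat with (2 * 2 ^ n)%nat by (simpl; lia).
    rewrite partial_sum_even_odd, partial_sum_plus.
    assert (P : 2 ^ n <> 0) by (apply pow_nonzero; lra).
    rewrite (partial_sum_ext (fun k => csc2 ((x / 2 + INR k * PI) / 2 ^ n))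
      (fun k => csc2 ((x + INR (2 * k) * PI) / 2 ^ S n)))
      by (intros k _; rewrite mult_INR; simpl; f_equal; field; auto).
    rewrite (partial_sum_ext (fun k => csc2 (((x + PI) / 2 + INR k * PI) / 2 ^ n))
      (fun k => csc2 ((x + INR (2 * k + 1) * PI) / 2 ^ S n)))
      by (intros k _; rewrite plus_INR, mult_INR; simpl; f_equal; field; auto).
    simpl; ring.
Qed.

Lemma sum_csc2_odd_multiples n :
  partial_sum (fun k => csc2 ((PI / 2 + INR k * PI) / (2 * 2 ^ n))) (2 ^ n) = 2 * (2 ^ n) ^ 2.
Proof.
  set (f := fun k => csc2 ((PI / 2 + INR k * PI) / (2 * 2 ^ n))).
  set (N := (2 ^ n)%nat).
  assert (HN : INR N = 2 ^ n) by (unfold N; rewrite pow_INR; reflexivity).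
  assert (Hn : 2 ^ n <> 0) by (apply pow_nonzero; lra).
  assert (Hpow : (/ 4) ^ n * (2 ^ n) ^ 2 = 1).
  { rewrite <- pow_mult, Nat.mul_comm, pow_mult, <- Rpow_mult_distr.
    replace (/ 4 * 2 ^ 2) with 1 by field; apply pow1. }
  (* the upper half of the sum mirrors the lower half, since sin (PI - u) = sin u *)
  assert (Hmirror : partial_sum (fun k => f (N + k)%nat) N = partial_sum f N).
  { rewrite partial_sum_rev; apply partial_sum_ext; intros k Hk; unfold f, csc2.
    rewrite <- (sin_PI_x ((PI / 2 + INR k * PI) / (2 * 2 ^ n))); do 3 f_equal.
    rewrite plus_INR, !minus_INR, HN by lia; simpl; field; auto. }
  pose proof (csc2_iterated_half_angles (S n) (PI / 2)) as H.
  unfold csc2 at 1 in H; rewrite sin_PI2, pow1, Rinv_1 in H; specialize (H ltac:(lra)).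
  replace (2 ^ S n)%nat with (N + N)%nat in H by (unfold N; simpl; lia).
  rewrite partial_sum_app in H.
  change (partial_sum (fun k => f (N + k)%nat) N) with
    (partial_sum (fun k => csc2 ((PI / 2 + INR (N + k) * PI) / 2 ^ S n)) N) in Hmirror.
  change (partial_sum f N) with
    (partial_sum (fun k => csc2 ((PI / 2 + INR k * PI) / 2 ^ S n)) N) in Hmirror |- *.
  rewrite Hmirror in H.
  replace ((/ 4) ^ S n) with (/ 4 * (/ 4) ^ n) in H by reflexivity.
  apply (Rmult_eq_reg_l ((/ 4) ^ n * / 4)); [| apply Rmult_integral_contrapositive; split;
    [apply pow_nonzero|]; lra].
  replace ((/ 4) ^ n * / 4 * (2 * (2 ^ n) ^ 2)) with (/ 2 * ((/ 4) ^ n * (2 ^ n) ^ 2)) by field.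
  rewrite Hpow; simpl pow in H |- *; lra.
Qed.

Lemma x_cos_le_sin x : 0 <= x <= PI / 2 -> x * cos x <= sin x.
Proof.
  intros Hx; pose proof PI_RGT_0.
  destruct (Req_dec x 0) as [->|Hx0]; [rewrite sin_0; lra|].
  destruct (MVT_cor2 (fun u => sin u - u * cos u) (fun u => u * sin u) 0 x)
    as (c & E & Hc); [lra| |].
  - intros c _; apply is_derive_Reals; auto_derive; auto; ring.
  - rewrite sin_0, Rmult_0_l, Rminus_0_r in E.
    assert (0 <= c * sin c * (x - 0)) by
      (repeat apply Rmult_le_pos; try apply sin_ge_0; lra).
    lra.
Qed.

Lemma csc2_bounds x : 0 < x <= PI / 2 -> / x ^ 2 <= csc2 x <= / x ^ 2 + 1.
Proof.
  intros Hx; pose proof PI_RGT_0.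
  assert (Hs : 0 < sin x) by (apply sin_gt_0; lra).
  pose proof (sin_lt_x x ltac:(lra)); pose proof (x_cos_le_sin x ltac:(lra)).
  assert (Hc : 0 <= cos x) by (apply cos_ge_0; lra).
  pose proof (sin2_cos2 x) as E; unfold Rsqr in E.
  unfold csc2; split.
  - apply Rinv_le_contravar; [apply pow_lt; lra | apply pow_incr; lra].
  - assert (x * x * (cos x * cos x) <= sin x * sin x).
    { replace (x * x * (cos x * cos x)) with ((x * cos x) * (x * cos x)) by ring.
      apply Rmult_le_compat; try apply Rmult_le_pos; lra. }
    apply (Rmult_le_reg_r (x ^ 2 * sin x ^ 2)); [nra|].
    replace (/ sin x ^ 2 * (x ^ 2 * sin x ^ 2)) with (x ^ 2) by (field; lra).
    replace ((/ x ^ 2 + 1) * (x ^ 2 * sin x ^ 2)) with (sin x ^ 2 + x ^ 2 * sin x ^ 2)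
      by (field; lra).
    simpl; nra.
Qed.

Definition odd_inv_sq_sum (N : nat) : R := partial_sum (fun k => / (2 * INR k + 1) ^ 2) N.
Definition inv_sq_sum (N : nat) : R := partial_sum (fun k => / (INR k + 1) ^ 2) N.

Lemma odd_inv_sq_sum_pow2_bounds n :
  PI ^ 2 / 8 - PI ^ 2 / (16 * 2 ^ n) <= odd_inv_sq_sum (2 ^ n) <= PI ^ 2 / 8.
Proof.
  pose proof PI_RGT_0.
  set (N := (2 ^ n)%nat).
  assert (HN : INR N = 2 ^ n) by (unfold N; rewrite pow_INR; reflexivity).
  assert (Hp : 0 < 2 ^ n) by (apply pow_lt; lra).
  set (C := 16 * (2 ^ n) ^ 2 / PI ^ 2).
  assert (HC : 0 < C) by (unfold C; apply Rdiv_lt_0_compat; [nra | apply pow_lt; lra]).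
  assert (Hterm : forall k, (k < N)%nat ->
    C * / (2 * INR k + 1) ^ 2 <= csc2 ((PI / 2 + INR k * PI) / (2 * 2 ^ n)) <=
    C * / (2 * INR k + 1) ^ 2 + 1).
  { intros k Hk; pose proof (pos_INR k).
    replace (C * / (2 * INR k + 1) ^ 2) with (/ ((PI / 2 + INR k * PI) / (2 * 2 ^ n)) ^ 2)
      by (unfold C; field; repeat split; nra).
    apply csc2_bounds.
    assert (INR k + 1 <= INR N) by (rewrite <- S_INR; apply le_INR; lia).
    split; [apply Rdiv_lt_0_compat; nra|].
    apply (Rmult_le_reg_r (2 * 2 ^ n)); [lra|].
    unfold Rdiv; rewrite Rmult_assoc, Rinv_l by lra; nra. }
  pose proof (sum_csc2_odd_multiples n) as S; fold N in S.
  assert (Lo : C * odd_inv_sq_sum N <= 2 * (2 ^ n) ^ 2).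
  { rewrite <- S; unfold odd_inv_sq_sum; rewrite <- partial_sum_scal.
    apply partial_sum_le; intros k Hk; apply Hterm; auto. }
  assert (Up : 2 * (2 ^ n) ^ 2 <= C * odd_inv_sq_sum N + INR N).
  { rewrite <- S; unfold odd_inv_sq_sum; rewrite <- partial_sum_scal.
    rewrite <- (Rmult_1_r (INR N)), <- partial_sum_const, <- partial_sum_plus.
    apply partial_sum_le; intros k Hk; apply Hterm; auto. }
  rewrite HN in Up; unfold C in Lo, Up.
  split; apply (Rmult_le_reg_l C); auto; unfold C.
  - replace (16 * (2 ^ n) ^ 2 / PI ^ 2 * (PI ^ 2 / 8 - PI ^ 2 / (16 * 2 ^ n)))
      with (2 * (2 ^ n) ^ 2 - 2 ^ n) by (field; lra); lra.
  - replace (16 * (2 ^ n) ^ 2 / PI ^ 2 * (PI ^ 2 / 8)) with (2 * (2 ^ n) ^ 2)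
      by (field; lra); lra.
Qed.

Lemma odd_inv_sq_sum_incr n m : (n <= m)%nat -> odd_inv_sq_sum n <= odd_inv_sq_sum m.
Proof.
  apply partial_sum_incr; intros k; pose proof (pos_INR k).
  apply Rlt_le, Rinv_0_lt_compat, pow_lt; lra.
Qed.

Lemma inv_sq_sum_incr n m : (n <= m)%nat -> inv_sq_sum n <= inv_sq_sum m.
Proof.
  apply partial_sum_incr; intros k; pose proof (pos_INR k).
  apply Rlt_le, Rinv_0_lt_compat, pow_lt; lra.
Qed.

Lemma lt_pow2 n : (n < 2 ^ n)%nat.
Proof. induction n; simpl; lia. Qed.

Lemma odd_inv_sq_sum_le N : odd_inv_sq_sum N <= PI ^ 2 / 8.
Proof.
  apply (Rle_trans _ (odd_inv_sq_sum (2 ^ N))).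
  - apply odd_inv_sq_sum_incr; pose proof (lt_pow2 N); lia.
  - apply odd_inv_sq_sum_pow2_bounds.
Qed.

Lemma odd_inv_sq_sum_cv : Un_cv odd_inv_sq_sum (PI ^ 2 / 8).
Proof.
  intros eps He; pose proof PI_RGT_0.
  assert (HPI2 : 0 < PI ^ 2) by nra.
  destruct (archimed_cor1 (eps / PI ^ 2)) as (n & Hn & Hn0);
    [apply Rdiv_lt_0_compat; auto|].
  exists (2 ^ n)%nat; intros m Hm; unfold R_dist.
  pose proof (odd_inv_sq_sum_pow2_bounds n) as [Lo _].
  pose proof (odd_inv_sq_sum_incr _ _ Hm); pose proof (odd_inv_sq_sum_le m).
  assert (PI ^ 2 / (16 * 2 ^ n) < eps).
  { assert (INR n <= 2 ^ n)
      by (rewrite <- (pow_INR 2); apply le_INR; pose proof (lt_pow2 n); lia).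
    assert (0 < INR n) by (apply lt_0_INR; auto).
    assert (/ 2 ^ n <= / INR n) by (apply Rinv_le_contravar; auto).
    assert (/ INR n * PI ^ 2 < eps).
    { apply (Rmult_lt_reg_r (/ PI ^ 2)); [apply Rinv_0_lt_compat; auto|].
      replace (/ INR n * PI ^ 2 * / PI ^ 2) with (/ INR n) by (field; lra); exact Hn. }
    unfold Rdiv; rewrite Rinv_mult; nra. }
  rewrite Rabs_left1; lra.
Qed.

Lemma inv_sq_sum_double N : inv_sq_sum (2 * N) = odd_inv_sq_sum N + inv_sq_sum N / 4.
Proof.
  unfold inv_sq_sum, odd_inv_sq_sum; rewrite partial_sum_even_odd.
  unfold Rdiv; rewrite Rmult_comm, <- partial_sum_scal, <- partial_sum_plus.
  apply partial_sum_ext; intros k _; pose proof (pos_INR k).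
  rewrite plus_INR, mult_INR; simpl; field; lra.
Qed.

Lemma inv_sq_sum_le N : inv_sq_sum N <= PI ^ 2 / 6.
Proof.
  pose proof (inv_sq_sum_double N); pose proof (inv_sq_sum_incr N (2 * N) ltac:(lia)).
  pose proof (odd_inv_sq_sum_le N); lra.
Qed.

(* The limit [l] exists by monotonicity and satisfies [l = PI^2/8 + l/4]. *)
Lemma inv_sq_sum_cv : Un_cv inv_sq_sum (PI ^ 2 / 6).
Proof.
  destruct (growing_cv inv_sq_sum) as [l Hl].
  { intros n; apply inv_sq_sum_incr; lia. }
  { exists (PI ^ 2 / 6); intros x [n ->]; apply inv_sq_sum_le. }
  assert (Hdouble : Un_cv (fun N => inv_sq_sum (2 * N)) l).
  { intros eps He; destruct (Hl eps He) as [N0 HN]; exists N0; intros n Hn; apply HN; lia. }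
  assert (Hsplit : Un_cv (fun N => odd_inv_sq_sum N + inv_sq_sum N * / 4) (PI ^ 2 / 8 + l * / 4)).
  { apply CV_plus; [apply odd_inv_sq_sum_cv|].
    apply (continuity_seq (fun y => y * / 4)); [reg | exact Hl]. }
  assert (l = PI ^ 2 / 8 + l * / 4).
  { eapply UL_sequence; [apply Hdouble|].
    eapply Un_cv_ext; [|apply Hsplit]; intros n; rewrite inv_sq_sum_double; reflexivity. }
  replace (PI ^ 2 / 6) with l by lra; auto.
Qed.

(** * Riemann–Stieltjes sums against a piecewise smooth integrator *)

Lemma exp_le a b : a <= b -> exp a <= exp b.
Proof. intros [H | ->]; [left; apply exp_increasing|]; lra. Qed.

Lemma Rabs_dist_le_of_deriv_bound f df x y M :
  (forall c, derivable_pt_lim f c (df c)) ->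
  (forall c, x <= c <= y -> Rabs (df c) <= M) ->
  forall u v, x <= u <= y -> x <= v <= y -> Rabs (f u - f v) <= M * Rabs (u - v).
Proof.
  intros Hd Hb u v Hu Hv.
  destruct (MVT_abs f df v u) as (c & -> & Hc); [intros; auto|].
  apply Rmult_le_compat_r; [apply Rabs_pos|]; apply Hb.
  unfold Rmin, Rmax in Hc; destruct (Rle_dec v u); lra.
Qed.

(* With [P' = f G'], both [G b - G a] and [P b - P a] are given by the mean value
   theorem at points of [[a, b]]; the tag and the two mean-value points differ by
   at most [y - x]. *)
Lemma stieltjes_step_error f df G dG ddG P x y M :
  (forall c, derivable_pt_lim f c (df c)) ->
  (forall c, derivable_pt_lim G c (dG c)) ->
  (forall c, derivable_pt_lim dG c (ddG c)) ->
  (forall c, derivable_pt_lim P c (f c * dG c)) ->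
  (forall c, x <= c <= y ->
     Rabs (f c) <= M /\ Rabs (df c) <= M /\ Rabs (dG c) <= M /\ Rabs (ddG c) <= M) ->
  forall a b t, x <= a -> a <= b -> b <= y -> x <= t <= y ->
  Rabs (f t * (G b - G a) - (P b - P a)) <= 2 * M * M * (b - a) * (y - x).
Proof.
  intros Hf HG HdG HP Hb a b t Ha Hab Hby Ht.
  assert (HM : 0 <= M)
    by (destruct (Hb t Ht) as (H1 & _); pose proof (Rabs_pos (f t)); lra).
  destruct (Req_dec a b) as [<-|Hne].
  { replace (f t * (G a - G a) - (P a - P a)) with 0 by ring; rewrite Rabs_R0; lra. }
  destruct (MVT_cor2 G dG a b) as (c1 & -> & Hc1); [lra | intros; auto|].
  destruct (MVT_cor2 P (fun c => f c * dG c) a b) as (c2 & -> & Hc2); [lra | intros; auto|].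
  assert (Hc1' : x <= c1 <= y) by lra; assert (Hc2' : x <= c2 <= y) by lra.
  assert (Hxy : forall u v, x <= u <= y -> x <= v <= y -> M * Rabs (u - v) <= M * (y - x))
    by (intros u v Hu Hv; apply Rmult_le_compat_l; [| apply Rabs_le]; lra).
  pose proof (Rabs_dist_le_of_deriv_bound f df x y M Hf
    ltac:(intros c Hc; apply (Hb c Hc)) t c2 Ht Hc2') as Lf.
  pose proof (Rabs_dist_le_of_deriv_bound dG ddG x y M HdG
    ltac:(intros c Hc; apply (Hb c Hc)) c1 c2 Hc1' Hc2') as LdG.
  pose proof (Hxy t c2 Ht Hc2'); pose proof (Hxy c1 c2 Hc1' Hc2').
  destruct (Hb c1 Hc1') as (_ & _ & B1 & _); destruct (Hb c2 Hc2') as (B2 & _ & _ & _).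
  replace (f t * (dG c1 * (b - a)) - f c2 * dG c2 * (b - a)) with
    ((b - a) * ((f t - f c2) * dG c1 + f c2 * (dG c1 - dG c2))) by ring.
  rewrite Rabs_mult, (Rabs_right (b - a)) by lra.
  replace (2 * M * M * (b - a) * (y - x)) with ((b - a) * (2 * M * M * (y - x))) by ring.
  apply Rmult_le_compat_l; [lra|].
  eapply Rle_trans; [apply Rabs_triang|]; rewrite !Rabs_mult.
  assert (Rabs (f t - f c2) * Rabs (dG c1) <= M * (y - x) * M)
    by (apply Rmult_le_compat; auto using Rabs_pos; lra).
  assert (Rabs (f c2) * Rabs (dG c1 - dG c2) <= M * (M * (y - x)))
    by (apply Rmult_le_compat; auto using Rabs_pos; lra).
  lra.
Qed.

Lemma tagged_partition_in_interval a b n p t delta :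
  tagged_partition a b n p t delta -> forall k, (k <= n)%nat -> a <= p k <= b.
Proof.
  intros (Hp0 & Hpn & Hp).
  assert (Hincr : forall k j, (k + j <= n)%nat -> p k <= p (k + j)%nat).
  { intros k j; induction j as [|j IH]; intros Hkj; [rewrite Nat.add_0_r; lra|].
    rewrite Nat.add_succ_r; destruct (Hp (k + j)%nat ltac:(lia)) as (H & _).
    specialize (IH ltac:(lia)); lra. }
  intros k Hk; split.
  - rewrite <- Hp0; apply (Hincr O k); lia.
  - rewrite <- Hpn; pose proof (Hincr k (n - k)%nat ltac:(lia)) as Hk'.
    replace (k + (n - k))%nat with n in Hk' by lia; exact Hk'.
Qed.

Section LocalErrorCriterion.

Variables (g F H U : R -> R) (a b K : R).
Hypothesis K_ge0 : 0 <= K.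
Hypothesis U_incr : forall x y, a <= x -> x <= y -> y <= b -> U x <= U y.
Hypothesis local_error_le : forall x t y, a <= x -> x <= t -> t <= y -> y <= b -> y - x <= 1 ->
  Rabs (g t * (F y - F x) - (H y - H x)) <= K * (y - x) * (U y - U x).

Lemma rs_sum_error_le n p t d : d <= 1 -> tagged_partition a b n p t d ->
  Rabs (rs_sum g F p t n - (H b - H a)) <= K * d * (U b - U a).
Proof.
  intros Hd Hpart.
  pose proof (tagged_partition_in_interval _ _ _ _ _ _ Hpart) as Hin.
  destruct Hpart as (Hp0 & Hpn & Hp); rewrite <- Hpn.
  assert (Hacc : forall k, (k <= n)%nat ->
     Rabs (rs_sum g F p t k - (H (p k) - H a)) <= K * d * (U (p k) - U a));
    [|apply Hacc; lia].
  induction k as [|k IH]; intros Hk; simpl.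
  - rewrite Hp0; replace (0 - (H a - H a)) with 0 by ring; rewrite Rabs_R0; lra.
  - specialize (IH ltac:(lia)); destruct (Hp k ltac:(lia)) as (H1 & H2 & H3).
    pose proof (Hin k ltac:(lia)); pose proof (Hin (S k) ltac:(lia)).
    pose proof (local_error_le (p k) (t k) (p (S k)) ltac:(lra) ltac:(lra) ltac:(lra)
      ltac:(lra) ltac:(lra)).
    pose proof (U_incr (p k) (p (S k)) ltac:(lra) ltac:(lra) ltac:(lra)).
    assert (K * (p (S k) - p k) * (U (p (S k)) - U (p k)) <= K * d * (U (p (S k)) - U (p k)))
      by (apply Rmult_le_compat_r; [| apply Rmult_le_compat_l]; lra).
    replace (rs_sum g F p t k + g (t k) * (F (p (S k)) - F (p k)) - (H (p (S k)) - H a))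
      with ((rs_sum g F p t k - (H (p k) - H a))
            + (g (t k) * (F (p (S k)) - F (p k)) - (H (p (S k)) - H (p k)))) by ring.
    eapply Rle_trans; [apply Rabs_triang|]; lra.
Qed.

Lemma RS_integral_of_local_error : a <= b -> RS_integral g F a b (H b - H a).
Proof.
  intros Hab eps He.
  set (W := U b - U a).
  assert (HW : 0 <= W) by (pose proof (U_incr a b); unfold W; lra).
  set (d := Rmin 1 (eps / (K * W + 1))).
  assert (Hd : 0 < d) by (apply Rmin_pos; [lra | apply Rdiv_lt_0_compat; nra]).
  exists d; split; [exact Hd|]; intros n p t Hpart.
  eapply Rle_lt_trans; [apply (rs_sum_error_le n p t d); [apply Rmin_l | exact Hpart]|].
  assert (d <= eps / (K * W + 1)) by apply Rmin_r.
  apply (Rle_lt_trans _ (K * W * (eps / (K * W + 1)))).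
  - fold W; replace (K * d * W) with (K * W * d) by ring.
    apply Rmult_le_compat_l; [nra | assumption].
  - replace (K * W * (eps / (K * W + 1))) with (eps * (K * W / (K * W + 1))) by (field; nra).
    assert (K * W / (K * W + 1) < 1)
      by (apply (Rmult_lt_reg_r (K * W + 1)); [nra|]; unfold Rdiv;
          rewrite Rmult_assoc, Rinv_l; nra).
    nra.
Qed.

End LocalErrorCriterion.

Lemma rs_sum_ext g1 g2 F p t n :
  (forall x, g1 x = g2 x) -> rs_sum g1 F p t n = rs_sum g2 F p t n.
Proof. intros E; induction n; simpl; auto; rewrite IHn, E; auto. Qed.

Lemma LS_integral_0_inf_ext g1 g2 F L :
  (forall x, g1 x = g2 x) -> LS_integral_0_inf g1 F L -> LS_integral_0_inf g2 F L.
Proof.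
  intros E (I & HI & Hlim); exists I; split.
  - intros T HT eps He; destruct (HI T HT eps He) as (d & Hd & Hsum).
    exists d; split; auto; intros; rewrite <- (rs_sum_ext g1 g2) by auto; auto.
  - intros eps He; destruct (Hlim eps He) as (M & HM); exists M; intros; rewrite <- E; auto.
Qed.

(** * The distribution xi *)

Lemma Rabs_sin_le_1 x : Rabs (sin x) <= 1.
Proof. apply Rabs_le, SIN_bound. Qed.

Lemma Rabs_cos_le_1 x : Rabs (cos x) <= 1.
Proof. apply Rabs_le, COS_bound. Qed.

Definition trig_poly (a b c s : R) : R := a + b * cos s + c * sin s.

Lemma Rabs_trig_poly_le a b c s : Rabs (trig_poly a b c s) <= Rabs a + Rabs b + Rabs c.
Proof.
  unfold trig_poly.
  pose proof (Rabs_cos_le_1 s); pose proof (Rabs_sin_le_1 s).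
  assert (Rabs (b * cos s) <= Rabs b)
    by (rewrite Rabs_mult; pose proof (Rabs_pos b); pose proof (Rabs_pos (cos s)); nra).
  assert (Rabs (c * sin s) <= Rabs c)
    by (rewrite Rabs_mult; pose proof (Rabs_pos c); pose proof (Rabs_pos (sin s)); nra).
  pose proof (Rabs_triang (a + b * cos s) (c * sin s)); pose proof (Rabs_triang a (b * cos s)).
  lra.
Qed.

Definition amp : R := 3 * PI + 1.

Lemma amp_gt_10 : 10 < amp.
Proof. unfold amp; pose proof PI2_3_2; lra. Qed.

Definition psi (s : R) : R := trig_poly amp (-1) 1 s.

Lemma phi1_eq s : phi1 s = exp (- s) * psi s.
Proof.
  unfold phi1, psi, trig_poly, amp; f_equal.
  rewrite sin_minus, cos_PI4, sin_PI4; pose proof Rlt_sqrt2_0; field; lra.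
Qed.

(* [block s] indexes the interval [[2 PI k, 2 PI (k + 1))] containing [s >= 0], on
   which [phi2] takes the value [block_weight k]. *)
Definition block (s : R) : nat := Z.to_nat (Int_part (s / (2 * PI))).

Definition block_weight (k : nat) : R :=
  match k with O => / (3 * PI) | S _ => / (PI ^ 3 * INR k ^ 2) end.

Lemma INR_block s : 0 <= s -> INR (block s) = IZR (Int_part (s / (2 * PI))).
Proof.
  intros Hs; pose proof PI_RGT_0.
  destruct (base_Int_part (s / (2 * PI))) as [_ H2].
  assert (0 <= s / (2 * PI)) by (apply Rdiv_le_0_compat; lra).
  assert (Hm : -1 < IZR (Int_part (s / (2 * PI)))) by lra.
  apply lt_IZR in Hm.
  unfold block; rewrite INR_IZR_INZ, Z2Nat.id by lia; reflexivity.
Qed.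

Lemma block_spec s : 0 <= s -> 2 * PI * INR (block s) <= s < 2 * PI * (INR (block s) + 1).
Proof.
  intros Hs; pose proof PI_RGT_0; rewrite INR_block by exact Hs.
  destruct (base_Int_part (s / (2 * PI))) as [H1 H2].
  set (z := IZR (Int_part (s / (2 * PI)))) in *.
  replace s with (2 * PI * (s / (2 * PI))) by (field; lra).
  split; apply Rmult_le_compat_l || apply Rmult_lt_compat_l; lra.
Qed.

Lemma block_unique s m : 2 * PI * INR m <= s < 2 * PI * (INR m + 1) -> block s = m.
Proof.
  intros [H1 H2]; pose proof PI_RGT_0; unfold block.
  rewrite <- (Int_part_spec (s / (2 * PI)) (Z.of_nat m)); [apply Nat2Z.id|].
  rewrite <- INR_IZR_INZ; split.
  - apply (Rmult_lt_reg_r (2 * PI)); [lra|].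
    replace ((s / (2 * PI) - 1) * (2 * PI)) with (s - 2 * PI) by (field; lra); lra.
  - apply (Rmult_le_reg_r (2 * PI)); [lra|].
    replace (s / (2 * PI) * (2 * PI)) with s by (field; lra); lra.
Qed.

Lemma block_0 : block 0 = O.
Proof. apply block_unique; simpl; pose proof PI_RGT_0; lra. Qed.

Lemma block_le x y : 0 <= x -> x <= y -> (block x <= block y)%nat.
Proof.
  intros Hx Hxy; pose proof (block_spec x Hx); pose proof (block_spec y ltac:(lra)).
  pose proof PI_RGT_0.
  destruct (le_lt_dec (block x) (block y)) as [|Hlt]; auto.
  apply le_INR in Hlt; rewrite S_INR in Hlt; nra.
Qed.

Lemma block_step x y : 0 <= x -> x <= y -> y - x < 2 * PI ->
  block y = block x \/ block y = S (block x).
Proof.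
  intros Hx Hxy Hyx; pose proof PI_RGT_0.
  pose proof (block_spec x Hx); pose proof (block_spec y ltac:(lra)).
  pose proof (block_le x y Hx Hxy).
  assert (INR (block y) < INR (block x) + 2) by nra.
  assert (block y < S (S (block x)))%nat by (apply INR_lt; rewrite !S_INR; lra).
  lia.
Qed.

Lemma block_ge N T : 2 * PI * INR N <= T -> (N <= block T)%nat.
Proof.
  intros HT; pose proof PI_RGT_0; pose proof (pos_INR N).
  pose proof (block_spec T ltac:(nra)).
  assert (INR N < INR (block T) + 1) by nra.
  rewrite <- S_INR in H2; apply INR_lt in H2; lia.
Qed.

Lemma block_weight_bounds k : 0 <= block_weight k <= 1.
Proof.
  pose proof PI2_3_2.
  assert (Hk : forall x, 1 <= x -> 0 <= / x <= 1).
  { intros x Hx; split; [apply Rlt_le, Rinv_0_lt_compat; lra|].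
    rewrite <- Rinv_1; apply Rinv_le_contravar; lra. }
  destruct k as [|k]; apply Hk; [lra|].
  assert (1 <= INR (S k)) by (rewrite S_INR; pose proof (pos_INR k); lra).
  assert (1 <= PI ^ 3) by (apply pow_R1_Rle; lra).
  assert (1 <= INR (S k) ^ 2) by (apply pow_R1_Rle; lra).
  nra.
Qed.

Lemma Rabs_block_weight_mult_le k e b : Rabs e <= b -> Rabs (block_weight k * e) <= b.
Proof.
  intros He; pose proof (block_weight_bounds k); pose proof (Rabs_pos e).
  rewrite Rabs_mult, Rabs_right by lra; nra.
Qed.

Definition cdf_profile (s : R) : R := - (exp (- s) * psi s).

Lemma xi_cdf_block s : 0 <= s -> xi_cdf s = 1 + block_weight (block s) * cdf_profile s.
Proof.
  intros Hs; pose proof PI_RGT_0.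
  unfold xi_cdf, xi_tail, phi2, cdf_profile; rewrite phi1_eq.
  destruct (Rlt_dec s 0); [lra|].
  destruct (Rlt_dec s (2 * PI)).
  - rewrite (block_unique s O) by (simpl; lra); simpl; ring.
  - pose proof (block_spec s Hs).
    destruct (block s) as [|k] eqn:E; [simpl in *; lra|].
    unfold block_weight; rewrite <- E, INR_block by exact Hs; ring.
Qed.

Lemma xi_cdf_0 : xi_cdf 0 = 0.
Proof.
  rewrite xi_cdf_block, block_0 by lra.
  unfold block_weight, cdf_profile, psi, trig_poly, amp.
  rewrite Ropp_0, exp_0, sin_0, cos_0; pose proof PI_RGT_0; field; lra.
Qed.

Lemma sum_block_weight_cv : Un_cv (partial_sum block_weight) (/ (2 * PI)).
Proof.
  intros eps He; pose proof PI_RGT_0.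
  assert (P3 : 0 < PI ^ 3) by (apply pow_lt; lra).
  destruct (inv_sq_sum_cv (eps * PI ^ 3) ltac:(nra)) as [N HN].
  exists (S N); intros m Hm; destruct m as [|n]; [lia|].
  specialize (HN n ltac:(lia)); unfold R_dist in *.
  rewrite partial_sum_shift.
  rewrite (partial_sum_ext _ (fun k => / PI ^ 3 * / (INR k + 1) ^ 2))
    by (intros k _; unfold block_weight; rewrite S_INR; field; pose proof (pos_INR k); lra).
  rewrite partial_sum_scal; fold (inv_sq_sum n).
  replace (block_weight 0 + / PI ^ 3 * inv_sq_sum n - / (2 * PI))
    with (/ PI ^ 3 * (inv_sq_sum n - PI ^ 2 / 6)) by (unfold block_weight; field; lra).
  rewrite Rabs_mult, Rabs_right by (left; apply Rinv_0_lt_compat; auto).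
  apply (Rmult_lt_reg_l (PI ^ 3)); auto; rewrite <- Rmult_assoc, Rinv_r by lra; lra.
Qed.

Lemma block_weight_cv : Un_cv block_weight 0.
Proof.
  intros eps He; destruct (archimed_cor1 eps He) as (N & HN & HN0).
  exists N; intros m Hm; unfold R_dist; rewrite Rminus_0_r.
  pose proof (block_weight_bounds m); rewrite Rabs_right by lra.
  destruct m as [|k]; [lia|]; unfold block_weight.
  pose proof PI2_3_2.
  assert (INR N <= INR (S k)) by (apply le_INR; lia).
  assert (0 < INR N) by (apply lt_0_INR; lia).
  assert (INR (S k) <= PI ^ 3 * INR (S k) ^ 2).
  { assert (1 <= INR (S k)) by (rewrite S_INR; pose proof (pos_INR k); lra).
    assert (1 <= PI ^ 3) by (apply pow_R1_Rle; lra).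
    replace (PI ^ 3 * INR (S k) ^ 2) with (PI ^ 3 * INR (S k) * INR (S k)) by ring; nra. }
  eapply Rle_lt_trans; [|apply HN]; apply Rinv_le_contravar; lra.
Qed.

Definition d_cdf_profile (s : R) : R := exp (- s) * trig_poly amp (-2) 0 s.
Definition d2_cdf_profile (s : R) : R := exp (- s) * trig_poly (- amp) 2 2 s.

Lemma cdf_profile_deriv s : derivable_pt_lim cdf_profile s (d_cdf_profile s).
Proof.
  apply is_derive_Reals; unfold cdf_profile, d_cdf_profile, psi, trig_poly.
  auto_derive; auto; ring.
Qed.

Lemma d_cdf_profile_deriv s : derivable_pt_lim d_cdf_profile s (d2_cdf_profile s).
Proof.
  apply is_derive_Reals; unfold d_cdf_profile, d2_cdf_profile, trig_poly.
  auto_derive; auto; ring.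
Qed.

Lemma trig_poly_at_period a b c m : trig_poly a b c (2 * PI * INR m) = a + b.
Proof.
  unfold trig_poly; replace (2 * PI * INR m) with (0 + 2 * INR m * PI) by ring.
  rewrite sin_period, cos_period, sin_0, cos_0; ring.
Qed.

Lemma cdf_profile_at_period m :
  cdf_profile (2 * PI * INR m) = - (exp (- (2 * PI * INR m)) * (amp - 1)).
Proof. unfold cdf_profile, psi; rewrite trig_poly_at_period; ring. Qed.

Lemma Rabs_cdf_profile_at_period_le m : Rabs (cdf_profile (2 * PI * INR m)) <= amp.
Proof.
  pose proof PI_RGT_0; pose proof amp_gt_10; pose proof (pos_INR m).
  assert (exp (- (2 * PI * INR m)) <= 1) by (rewrite <- exp_0; apply exp_le; nra).
  pose proof (exp_pos (- (2 * PI * INR m))).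
  rewrite cdf_profile_at_period, Rabs_Ropp, Rabs_right; nra.
Qed.

Section ExpTrigIntegrand.

Variables al be ga : R.

Definition exp_trig (s : R) : R := exp s * trig_poly al be ga s.
Definition d_exp_trig (s : R) : R := exp s * trig_poly al (be + ga) (ga - be) s.

(* As [exp s * exp (- s) = 1], [exp_trig * d_cdf_profile] is the trigonometric
   polynomial [trig_poly al be ga * trig_poly amp (-2) 0]; this is its antiderivative. *)
Definition stieltjes_primitive (s : R) : R :=
  (al * amp - be) * s + (be * amp - 2 * al) * sin s - ga * amp * cos s
  - be / 2 * sin (2 * s) + ga / 2 * cos (2 * s).

Definition period_increment : R := 2 * PI * (al * amp - be).

Lemma exp_trig_deriv s : derivable_pt_lim exp_trig s (d_exp_trig s).
Proof.
  apply is_derive_Reals; unfold exp_trig, d_exp_trig, trig_poly.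
  auto_derive; auto; ring.
Qed.

Lemma stieltjes_primitive_deriv s :
  derivable_pt_lim stieltjes_primitive s (exp_trig s * d_cdf_profile s).
Proof.
  apply is_derive_Reals; unfold stieltjes_primitive, exp_trig, d_cdf_profile, trig_poly.
  auto_derive; auto.
  replace (exp s * (al + be * cos s + ga * sin s) * (exp (- s) * (amp + -2 * cos s + 0 * sin s)))
    with ((exp s * exp (- s)) * ((al + be * cos s + ga * sin s) * (amp - 2 * cos s))) by ring.
  rewrite <- exp_plus, Rplus_opp_r, exp_0, cos_2a_cos, sin_2a; field.
Qed.

Lemma stieltjes_primitive_periodic s :
  stieltjes_primitive (s + 2 * PI) = stieltjes_primitive s + period_increment.
Proof.
  assert (Hsin : forall u, sin (u + 2 * PI) = sin u)
    by (intros u; rewrite <- (sin_period u 1); f_equal; simpl; ring).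
  assert (Hcos : forall u, cos (u + 2 * PI) = cos u)
    by (intros u; rewrite <- (cos_period u 1); f_equal; simpl; ring).
  unfold stieltjes_primitive, period_increment.
  replace (2 * (s + 2 * PI)) with ((2 * s + 2 * PI) + 2 * PI) by ring.
  rewrite !Hsin, !Hcos; ring.
Qed.

Definition coef_norm : R := Rabs al + Rabs be + Rabs ga.
Definition deriv_bound (T : R) : R := 2 * coef_norm * exp T + amp + 4.

Lemma deriv_bound_nonneg T : 0 <= deriv_bound T.
Proof.
  unfold deriv_bound, coef_norm; pose proof amp_gt_10; pose proof (exp_pos T).
  pose proof (Rabs_pos al); pose proof (Rabs_pos be); pose proof (Rabs_pos ga); nra.
Qed.

Lemma deriv_bounds T c : 0 <= c <= T ->
  Rabs (exp_trig c) <= deriv_bound T /\ Rabs (d_exp_trig c) <= deriv_bound T /\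
  Rabs (d_cdf_profile c) <= deriv_bound T /\ Rabs (d2_cdf_profile c) <= deriv_bound T.
Proof.
  intros Hc; pose proof amp_gt_10.
  assert (E1 : exp c <= exp T) by (apply exp_le; lra).
  assert (E2 : exp (- c) <= 1) by (rewrite <- exp_0; apply exp_le; lra).
  pose proof (exp_pos c); pose proof (exp_pos (- c)).
  pose proof (Rabs_pos al); pose proof (Rabs_pos be); pose proof (Rabs_pos ga).
  assert (Rabs (be + ga) <= Rabs be + Rabs ga) by apply Rabs_triang.
  assert (Rabs (ga - be) <= Rabs be + Rabs ga)
    by (unfold Rminus; rewrite <- (Rabs_Ropp be), Rplus_comm; apply Rabs_triang).
  pose proof (Rabs_trig_poly_le al be ga c).
  pose proof (Rabs_trig_poly_le al (be + ga) (ga - be) c).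
  pose proof (Rabs_trig_poly_le amp (-2) 0 c).
  pose proof (Rabs_trig_poly_le (- amp) 2 2 c).
  assert (Hamp : Rabs amp = amp) by (apply Rabs_right; lra).
  assert (Htwo : Rabs 2 = 2) by (apply Rabs_right; lra).
  assert (Hm2 : Rabs (-2) = 2) by (rewrite <- Htwo; apply Rabs_Ropp).
  rewrite Rabs_R0, Hamp, Hm2 in *; rewrite Rabs_Ropp, Hamp, Htwo in *.
  unfold deriv_bound, coef_norm, exp_trig, d_exp_trig, d_cdf_profile, d2_cdf_profile.
  rewrite !Rabs_mult, (Rabs_right (exp c)), (Rabs_right (exp (- c))) by lra.
  repeat split; nra.
Qed.


(* On block [k] the integrator is [1 + block_weight k * cdf_profile]; the constant
   collects the full periods of the earlier blocks and the jumps of [xi_cdf] at their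
   endpoints [2 PI j], where [exp_trig * cdf_profile = - (al + be) (amp - 1)]. *)
Definition block_primitive (k : nat) (s : R) : R :=
  period_increment * partial_sum block_weight k
  + (al + be) * (amp - 1) * (block_weight 0 - block_weight k)
  + block_weight k * (stieltjes_primitive s - stieltjes_primitive (2 * PI * INR k)).

Definition xi_primitive (s : R) : R := block_primitive (block s) s.

Definition block_clock (s : R) : R := s + INR (block s).

Definition local_error_constant (T : R) : R :=
  2 * deriv_bound T * deriv_bound T + amp * deriv_bound T.

Lemma block_clock_le x y : 0 <= x -> x <= y -> block_clock x <= block_clock y.
Proof. intros Hx Hxy; unfold block_clock; pose proof (le_INR _ _ (block_le x y Hx Hxy)); lra. Qed.

Definition step_error (t a b : R) : R :=
  exp_trig t * (cdf_profile b - cdf_profile a) - (stieltjes_primitive b - stieltjes_primitive a).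

Lemma step_error_le T x y : 0 <= x -> y <= T ->
  forall a b t, x <= a -> a <= b -> b <= y -> x <= t <= y ->
  Rabs (step_error t a b) <= 2 * deriv_bound T * deriv_bound T * (b - a) * (y - x).
Proof.
  intros Hx HyT; unfold step_error; apply (stieltjes_step_error exp_trig d_exp_trig cdf_profile
    d_cdf_profile d2_cdf_profile stieltjes_primitive); intros.
  - apply exp_trig_deriv.
  - apply cdf_profile_deriv.
  - apply d_cdf_profile_deriv.
  - apply stieltjes_primitive_deriv.
  - apply deriv_bounds; lra.
Qed.

Lemma local_error_same_block T x t y :
  0 <= x -> x <= t -> t <= y -> y <= T -> block y = block x ->
  Rabs (exp_trig t * (xi_cdf y - xi_cdf x) - (xi_primitive y - xi_primitive x))
  <= 2 * deriv_bound T * deriv_bound T * (y - x) * (y - x).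
Proof.
  intros Hx Hxt Hty HyT Hb.
  unfold xi_primitive; rewrite !xi_cdf_block, Hb by lra; set (k := block x).
  replace (exp_trig t * (1 + block_weight k * cdf_profile y - (1 + block_weight k * cdf_profile x))
           - (block_primitive k y - block_primitive k x))
    with (block_weight k * step_error t x y) by (unfold block_primitive, step_error; ring).
  apply Rabs_block_weight_mult_le, step_error_le; lra.
Qed.

Lemma cdf_profile_exp_trig_at_period m :
  cdf_profile (2 * PI * INR m) * exp_trig (2 * PI * INR m) = - (al + be) * (amp - 1).
Proof.
  unfold exp_trig; rewrite cdf_profile_at_period, trig_poly_at_period.
  replace (- (exp (- (2 * PI * INR m)) * (amp - 1)) * (exp (2 * PI * INR m) * (al + be)))
    with (- (exp (- (2 * PI * INR m)) * exp (2 * PI * INR m)) * (al + be) * (amp - 1)) by ring.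
  rewrite <- exp_plus, Rplus_opp_l, exp_0; ring.
Qed.

Lemma xi_increment_across_period x t y :
  0 <= x -> x <= t -> t <= y -> block y = S (block x) ->
  let k := block x in let j := 2 * PI * INR (S k) in
  exp_trig t * (xi_cdf y - xi_cdf x) - (xi_primitive y - xi_primitive x)
  = block_weight (S k) * step_error t j y + block_weight k * step_error t x j
    + (block_weight (S k) - block_weight k) * cdf_profile j * (exp_trig t - exp_trig j).
Proof.
  intros Hx Hxt Hty Hb k j.
  assert (Hprim : stieltjes_primitive j = stieltjes_primitive (2 * PI * INR k) + period_increment)
    by (unfold j; rewrite S_INR, <- stieltjes_primitive_periodic; f_equal; ring).
  pose proof (cdf_profile_exp_trig_at_period (S k)) as Hjump; fold j in Hjump.
  unfold xi_primitive; rewrite !xi_cdf_block, Hb by lra; fold k.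
  unfold block_primitive, step_error; simpl partial_sum; fold j; rewrite Hprim.
  replace ((block_weight (S k) - block_weight k) * cdf_profile j * (exp_trig t - exp_trig j))
    with ((block_weight (S k) - block_weight k) * cdf_profile j * exp_trig t
          - (block_weight (S k) - block_weight k) * (cdf_profile j * exp_trig j)) by ring.
  rewrite Hjump; ring.
Qed.

Lemma local_error_next_block T x t y :
  0 <= x -> x <= t -> t <= y -> y <= T -> block y = S (block x) ->
  Rabs (exp_trig t * (xi_cdf y - xi_cdf x) - (xi_primitive y - xi_primitive x))
  <= 2 * deriv_bound T * deriv_bound T * (y - x) * (y - x) + amp * deriv_bound T * (y - x).
Proof.
  intros Hx Hxt Hty HyT Hb; pose proof PI_RGT_0; pose proof amp_gt_10.
  rewrite (xi_increment_across_period x t y Hx Hxt Hty Hb).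
  set (M := deriv_bound T); set (k := block x); set (j := 2 * PI * INR (S k)).
  pose proof (block_spec x Hx) as Sx; pose proof (block_spec y ltac:(lra)) as Sy.
  rewrite Hb in Sy; fold k in Sx, Sy; rewrite S_INR in Sy.
  assert (Hxj : x <= j) by (unfold j; rewrite S_INR; lra).
  assert (Hjy : j <= y) by (unfold j; rewrite S_INR; lra).
  assert (HM : 0 <= M) by apply deriv_bound_nonneg.
  assert (E1 : Rabs (block_weight (S k) * step_error t j y) <= 2 * M * M * (y - j) * (y - x))
    by (apply Rabs_block_weight_mult_le, step_error_le; lra).
  assert (E2 : Rabs (block_weight k * step_error t x j) <= 2 * M * M * (j - x) * (y - x))
    by (apply Rabs_block_weight_mult_le, step_error_le; lra).
  assert (Hg : Rabs (exp_trig t - exp_trig j) <= M * (y - x)).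
  { eapply Rle_trans; [apply (Rabs_dist_le_of_deriv_bound exp_trig d_exp_trig x y M);
      [apply exp_trig_deriv | intros c Hc; apply deriv_bounds; lra | lra | lra]|].
    apply Rmult_le_compat_l; [exact HM | apply Rabs_le; lra]. }
  assert (HG : Rabs (cdf_profile j) <= amp) by (apply Rabs_cdf_profile_at_period_le).
  set (dc := block_weight (S k) - block_weight k).
  assert (Hdc : Rabs dc <= 1)
    by (pose proof (block_weight_bounds k); pose proof (block_weight_bounds (S k));
        apply Rabs_le; unfold dc; lra).
  assert (E3 : Rabs (dc * cdf_profile j * (exp_trig t - exp_trig j)) <= amp * M * (y - x)).
  { rewrite !Rabs_mult.
    pose proof (Rabs_pos dc); pose proof (Rabs_pos (cdf_profile j));
    pose proof (Rabs_pos (exp_trig t - exp_trig j)).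
    assert (Rabs dc * Rabs (cdf_profile j) <= amp) by nra.
    apply (Rle_trans _ (amp * (M * (y - x)))); [apply Rmult_le_compat|]; nra. }
  pose proof (Rabs_triang (block_weight (S k) * step_error t j y + block_weight k * step_error t x j)
    (dc * cdf_profile j * (exp_trig t - exp_trig j))).
  pose proof (Rabs_triang (block_weight (S k) * step_error t j y) (block_weight k * step_error t x j)).
  nra.
Qed.

Lemma local_error T x t y :
  0 <= x -> x <= t -> t <= y -> y <= T -> y - x <= 1 ->
  Rabs (exp_trig t * (xi_cdf y - xi_cdf x) - (xi_primitive y - xi_primitive x))
  <= local_error_constant T * (y - x) * (block_clock y - block_clock x).
Proof.
  intros Hx Hxt Hty HyT Hyx; pose proof PI2_3_2; pose proof amp_gt_10.
  pose proof (deriv_bound_nonneg T).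
  unfold local_error_constant, block_clock; set (M := deriv_bound T) in *.
  destruct (block_step x y Hx ltac:(lra) ltac:(lra)) as [Hb|Hb].
  - rewrite Hb; replace (y + INR (block x) - (x + INR (block x))) with (y - x) by ring.
    pose proof (local_error_same_block T x t y Hx Hxt Hty HyT Hb); fold M in H2.
    assert (0 <= amp * M * (y - x) * (y - x)) by (repeat apply Rmult_le_pos; lra).
    nra.
  - rewrite Hb, S_INR; replace (y + (INR (block x) + 1) - (x + INR (block x))) with (y - x + 1)
      by ring.
    pose proof (local_error_next_block T x t y Hx Hxt Hty HyT Hb); fold M in H2.
    assert (0 <= M * M * (y - x)) by (repeat apply Rmult_le_pos; nra).
    assert (0 <= amp * M * (y - x) * (y - x)) by (repeat apply Rmult_le_pos; lra).
    nra.
Qed.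

Lemma RS_integral_xi_primitive T : 0 < T ->
  RS_integral exp_trig xi_cdf 0 T (xi_primitive T - xi_primitive 0).
Proof.
  intros HT; apply (RS_integral_of_local_error _ _ _ block_clock _ _ (local_error_constant T)).
  - unfold local_error_constant; pose proof amp_gt_10; pose proof (deriv_bound_nonneg T); nra.
  - intros; apply block_clock_le; lra.
  - intros; apply local_error; lra.
  - lra.
Qed.

Lemma xi_primitive_0 : xi_primitive 0 = 0.
Proof. unfold xi_primitive, block_primitive; rewrite block_0; simpl; rewrite !Rmult_0_r; ring. Qed.

Lemma stieltjes_primitive_within_block T : 0 <= T ->
  Rabs (stieltjes_primitive T - stieltjes_primitive (2 * PI * INR (block T)))
  <= coef_norm * (amp + 2) * (2 * PI).
Proof.
  intros HT; pose proof (block_spec T HT); pose proof PI_RGT_0; pose proof amp_gt_10.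
  assert (0 <= coef_norm * (amp + 2)) by
    (unfold coef_norm; pose proof (Rabs_pos al); pose proof (Rabs_pos be);
     pose proof (Rabs_pos ga); nra).
  eapply Rle_trans; [apply (Rabs_dist_le_of_deriv_bound stieltjes_primitive
    (fun c => exp_trig c * d_cdf_profile c) (2 * PI * INR (block T)) T
    (coef_norm * (amp + 2)));
    [apply stieltjes_primitive_deriv | | lra | lra] |].
  - intros c _; unfold exp_trig, d_cdf_profile.
    replace (exp c * trig_poly al be ga c * (exp (- c) * trig_poly amp (-2) 0 c))
      with ((exp c * exp (- c)) * (trig_poly al be ga c * trig_poly amp (-2) 0 c)) by ring.
    rewrite <- exp_plus, Rplus_opp_r, exp_0, Rmult_1_l, Rabs_mult.
    pose proof (Rabs_trig_poly_le al be ga c); pose proof (Rabs_trig_poly_le amp (-2) 0 c).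
    replace (Rabs amp + Rabs (-2) + Rabs 0) with (amp + 2) in *
      by (rewrite Rabs_R0, (Rabs_left (-2)), (Rabs_right amp); lra).
    unfold coef_norm; apply Rmult_le_compat; try apply Rabs_pos; assumption.
  - apply Rmult_le_compat_l; [auto | apply Rabs_le; lra].
Qed.

(* The limit [al (amp + 1)] is [period_increment / (2 PI) + (al + be) * block_weight 0 * (amp - 1)],
   using [partial_sum block_weight -> 1 / (2 PI)] and [block_weight 0 * (amp - 1) = 1]. *)
Lemma xi_primitive_error T : 0 <= T ->
  Rabs (xi_primitive T - al * (amp + 1)) <=
  Rabs period_increment * Rabs (partial_sum block_weight (block T) - / (2 * PI))
  + (Rabs (al + be) * (amp - 1) + coef_norm * (amp + 2) * (2 * PI)) * block_weight (block T).
Proof.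
  intros HT; pose proof PI_RGT_0; pose proof amp_gt_10.
  set (m := block T); pose proof (block_weight_bounds m).
  replace (xi_primitive T - al * (amp + 1)) with
    (period_increment * (partial_sum block_weight m - / (2 * PI))
     + (al + be) * (amp - 1) * (- block_weight m)
     + block_weight m * (stieltjes_primitive T - stieltjes_primitive (2 * PI * INR m)))
    by (unfold xi_primitive, block_primitive, period_increment, block_weight, amp;
        fold m; field; lra).
  pose proof (stieltjes_primitive_within_block T HT); fold m in H2.
  pose proof (Rabs_triang (period_increment * (partial_sum block_weight m - / (2 * PI))
     + (al + be) * (amp - 1) * (- block_weight m))
    (block_weight m * (stieltjes_primitive T - stieltjes_primitive (2 * PI * INR m)))).
  pose proof (Rabs_triang (period_increment * (partial_sum block_weight m - / (2 * PI)))
     ((al + be) * (amp - 1) * (- block_weight m))).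
  rewrite !Rabs_mult, Rabs_Ropp, (Rabs_right (amp - 1)), (Rabs_right (block_weight m)) in * by lra.
  pose proof (Rabs_pos (stieltjes_primitive T - stieltjes_primitive (2 * PI * INR m))).
  nra.
Qed.

Lemma LS_integral_exp_trig : LS_integral_0_inf exp_trig xi_cdf (al * (amp + 1)).
Proof.
  exists (fun T => xi_primitive T - xi_primitive 0); split;
    [intros T HT; apply RS_integral_xi_primitive; auto|].
  set (C := Rabs (al + be) * (amp - 1) + coef_norm * (amp + 2) * (2 * PI)).
  set (err := fun m => Rabs period_increment * Rabs (partial_sum block_weight m - / (2 * PI))
                       + C * block_weight m).
  assert (Herr : Un_cv err 0).
  { replace 0 with (Rabs period_increment * Rabs (/ (2 * PI) - / (2 * PI)) + C * 0)
      by (rewrite Rminus_diag, Rabs_R0; ring).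
    apply CV_plus.
    - apply (continuity_seq (fun u => Rabs period_increment * Rabs (u - / (2 * PI)))).
      + apply continuity_pt_mult; [apply continuity_pt_const; intros ? ?; reflexivity|].
        apply (continuity_pt_comp (fun u => u - / (2 * PI)) Rabs); [reg | apply Rcontinuity_abs].
      + apply sum_block_weight_cv.
    - apply (continuity_seq (fun u => C * u)); [reg | apply block_weight_cv]. }
  intros eps He; destruct (Herr eps He) as [N HN].
  exists (2 * PI * INR N); intros T HT.
  pose proof PI_RGT_0; pose proof (pos_INR N).
  specialize (HN (block T) (block_ge N T ltac:(lra))); unfold R_dist in HN.
  rewrite xi_cdf_0, xi_primitive_0, Rmult_0_r, Rplus_0_l, Rminus_0_r.
  rewrite Rminus_0_r in HN.
  eapply Rle_lt_trans; [apply (xi_primitive_error T ltac:(nra)) |].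
  eapply Rle_lt_trans; [apply Rle_abs | exact HN].
Qed.

End ExpTrigIntegrand.

Theorem lemma3p1 :
  (exists L : R, LS_integral_0_inf (fun x => exp x) xi_cdf L) /\
  xi_hat_is 1 1 0 0.
Proof.
  split; [|split].
  - exists (1 * (amp + 1)).
    apply (LS_integral_0_inf_ext (exp_trig 1 0 0)); [|apply LS_integral_exp_trig].
    intros x; unfold exp_trig, trig_poly; ring.
  - rewrite <- (Rmult_0_l (amp + 1)).
    apply (LS_integral_0_inf_ext (exp_trig 0 1 0)); [|apply LS_integral_exp_trig].
    intros x; unfold exp_trig, trig_poly; rewrite !Rmult_1_l; ring.
  - rewrite <- (Rmult_0_l (amp + 1)).
    apply (LS_integral_0_inf_ext (exp_trig 0 0 1)); [|apply LS_integral_exp_trig].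
    intros x; unfold exp_trig, trig_poly; rewrite !Rmult_1_l; ring.
Qed.
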